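(* Consider the augmenting-path algorithm for online generalized network flow with resulting flows $x^{(0)},x^{(1)},\dots,x^{(T)}$. Let $t\in[T]$ and let $v$ be a vertex of the graph at time $t-1$. Then $\mathrm{height}_t(v)\ge\mathrm{height}_{t-1}(v)$.
   Context: Generalized network flow instance: digraph $G=(V,E)$ without anti-parallel edges, sources with no incoming edges, sink $\tau$ with no outgoing edges, edge capacities $\mu_e>0$, costs $c_e>0$, gains $\gamma_e>0$; convention: every vertex $v\ne\tau$ has a dummy edge $v\tau$ of infinite capacity, gain $1$ and sufficiently large cost $B$. Online generalized network flow: sources $s_1,\dots,s_T$ (each with supply $1$) arrive one at a time with their outgoing edges. Residual graph $G^x$ for $x$ with $0\le x_e\le\mu_e$: forward edge $uv$ (capacity $\mu_{uv}-x_{uv}$, cost $c_{uv}$, gain $\gamma_{uv}$) if $x_{uv}<\mu_{uv}$; backward edge $vu$ (capacity $\gamma_{uv}x_{uv}$, cost $0$, gain $1/\gamma_{uv}$) if $x_{uv}>0$. A fractional augmenting path from $s\neq\tau$ in $G^x$ is $f\ge0$ on the residual edges with out-minus-gain-weighted-in flow equal to $1$ at $s$ and $0$ at every vertex other than $s,\tau$; cost $\sum_e c^x_ef_e$. It is an augmenting path if its support is a path from $s$ to $\tau$, or a cycle through $s$ avoiding $\tau$, or a cycle avoiding $s,\tau$ together with a path from $s$ to the cycle internally disjoint from it. Augmenting $x$ by $\theta$ units using $f$: for each forward residual edge $uv$ set $x_{uv}\gets x_{uv}+\theta f_{uv}$, and for each backward residual edge $vu$ set $x_{uv}\gets x_{uv}-\theta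 f_{vu}/\gamma_{uv}$. The algorithm: $x^{(0)}=0$; at time $t$, add $s_t$ and its edges, set $x\gets x^{(t-1)}$ (zero on new edges), and while $\sum_{e\in\delta^+(s_t)}x_e<1$, find a cheapest augmenting path $f$ from $s_t$ in $G^x$, let $\theta>0$ be the largest value such that augmenting by $\theta$ using $f$ keeps $x_e\in[0,\mu_e]$ for all $e$ and $\sum_{e\in\delta^+(s_t)}x_e\le1$, and augment; finally $x^{(t)}\gets x$. For a vertex $v\ne\tau$ present at time $t$, $\mathrm{height}_t(v)$ is the minimum cost of an augmenting path from $v$ in $G^{x^{(t)}}$; $\mathrm{height}_t(\tau)=0$. *)

From HB Require Import structures.
From mathcomp Require Import all_boot all_order all_algebra.
Set Implicit Arguments. Unset Strict Implicit. Unset Printing Implicit Defensive.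
Import Order.TTheory GRing.Theory Num.Theory.
Local Open Scope ring_scope.

(* The whole graph (over all
   times) is given; vertex [src i] (i : 'I_T) is the source s_{i+1}, arriving at
   time i+1.  Edges are indexed by a finite type [E]; capacity [None] means
   infinite capacity (used for the dummy edges v -> tau). *)
Record gnf (R : realFieldType) := GNF {
  V : finType;
  E : finType;
  tail : E -> V;
  head : E -> V;
  tau : V;
  mu : E -> option R;
  cost : E -> R;
  gain : E -> R;
  Bcost : R;
  T : nat;
  src : 'I_T -> V
}.

Section GNF.
Variable R : realFieldType.
Variable I : gnf R.

Local Notation V := (V I).
Local Notation E := (E I).
Local Notation tail := (@tail R I).
Local Notation head := (@head R I).
Local Notation tau := (tau I).
Local Notation mu := (@mu R I).
Local Notation cost := (@cost R I).
Local Notation gain := (@gain R I).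
Local Notation B := (Bcost I).
Local Notation T := (T I).
Local Notation src := (@src R I).

Definition wf_instance : Prop :=
  injective src /\
  (forall i, src i != tau) /\
  (forall e i, head e != src i) /\
  (forall e, tail e != tau) /\
  (forall e, tail e != head e) /\
  (forall e f, ~~ ((tail e == head f) && (head e == tail f))) /\
  (forall e, 0 < cost e /\ 0 < gain e) /\
  (forall e m, mu e = Some m -> 0 < m) /\
  0 < B /\
  (forall v, v != tau -> exists e,
      [/\ tail e = v, head e = tau, mu e = None, gain e = 1 & cost e = B]) /\
  (forall e, mu e = None -> [/\ head e = tau, gain e = 1 & cost e = B]).

(* vertices present at time t: non-sources, and s_1,...,s_t *)
Definition present (t : nat) (v : V) : bool :=
  [forall i : 'I_T, (src i == v) ==> (i < t)%N].

Definition epresent (t : nat) (e : E) : bool :=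
  present t (tail e) && present t (head e).

(* Residual edges: (e, true) is the forward copy of e, (e, false) the backward. *)
Definition redge := (E * bool)%type.

Definition rtail (a : redge) : V := if a.2 then tail a.1 else head a.1.
Definition rhead (a : redge) : V := if a.2 then head a.1 else tail a.1.
Definition rcost (a : redge) : R := if a.2 then cost a.1 else 0.
Definition rgain (a : redge) : R := if a.2 then gain a.1 else (gain a.1)^-1.

Definition rexists (x : E -> R) (t : nat) (a : redge) : bool :=
  epresent t a.1 &&
  (if a.2 then (match mu a.1 with Some m => x a.1 < m | None => true end)
   else 0 < x a.1).

Definition netout (f : redge -> R) (w : V) : R :=
  \sum_(a : redge | rtail a == w) f a - \sum_(a : redge | rhead a == w) rgain a * f a.

Definition frac_aug (x : E -> R) (t : nat) (s : V) (f : redge -> R) : Prop :=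
  [/\ s != tau,
      (forall a, 0 <= f a),
      (forall a, f a != 0 -> rexists x t a) &
      (forall w, w != tau -> netout f w = (w == s)%:R)].

Definition aug_cost (f : redge -> R) : R := \sum_(a : redge) rcost a * f a.

Fixpoint walk (u : V) (p : seq redge) (w : V) : bool :=
  match p with
  | [::] => u == w
  | a :: p' => (rtail a == u) && walk (rhead a) p' w
  end.

Definition support_is (f : redge -> R) (p : seq redge) : Prop :=
  forall a, (f a != 0) = (a \in p).

Definition aug_path (x : E -> R) (t : nat) (s : V) (f : redge -> R) : Prop :=
  frac_aug x t s f /\
  [\/ exists p : seq redge,
        [/\ walk s p tau, uniq (s :: map rhead p) & support_is f p],
      exists p : seq redge,
        [/\ walk s p s, p != [::], uniq (map rhead p),
            tau \notin map rhead p & support_is f p] |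
      exists (P C : seq redge) (w : V),
        [/\ walk s P w, uniq (s :: map rhead P),
            walk w C w, C != [::] & uniq (map rhead C)] /\
        [/\ tau \notin map rhead C, s \notin map rhead C,
            (forall u, u \in s :: map rhead P -> u \in map rhead C -> u = w) &
            support_is f (P ++ C)]].

Definition cheapest_aug (x : E -> R) (t : nat) (s : V) (f : redge -> R) : Prop :=
  aug_path x t s f /\ forall g, aug_path x t s g -> aug_cost f <= aug_cost g.

Definition is_height (x : E -> R) (t : nat) (v : V) (h : R) : Prop :=
  if v == tau then h = 0
  else (exists f, aug_path x t v f /\ aug_cost f = h) /\
       (forall f, aug_path x t v f -> h <= aug_cost f).

Definition augment (x : E -> R) (theta : R) (f : redge -> R) : E -> R :=
  fun e => x e + theta * f (e, true) - theta * f (e, false) / gain e.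

Definition outflow (x : E -> R) (s : V) : R := \sum_(e : E | tail e == s) x e.

Definition feasible (x : E -> R) : Prop :=
  (forall e, 0 <= x e) /\ (forall e m, mu e = Some m -> x e <= m).

Definition theta_ok (y : E -> R) (s : V) (f : redge -> R) (th : R) : Prop :=
  feasible (augment y th f) /\ outflow (augment y th f) s <= 1.

(* Step of the algorithm at time i+1 (source s_{i+1} = src i): from x^{(i)} to
   x^{(i+1)} by a finite number of augmentations along cheapest augmenting paths,
   each by the largest feasible amount, while the outflow of s_{i+1} is < 1. *)
Definition alg_step (i : 'I_T) (x x' : E -> R) : Prop :=
  exists (n : nat) (ys : nat -> E -> R) (fs : nat -> redge -> R) (ths : nat -> R),
    [/\ ys 0%N = x, ys n = x', 1 <= outflow (ys n) (src i) &
        forall k, (k < n)%N ->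
          [/\ outflow (ys k) (src i) < 1,
              cheapest_aug (ys k) i.+1 (src i) (fs k),
              0 < ths k,
              theta_ok (ys k) (src i) (fs k) (ths k) &
              (forall th, 0 < th -> theta_ok (ys k) (src i) (fs k) th -> th <= ths k)] /\
          ys k.+1 = augment (ys k) (ths k) (fs k)].

Definition alg_run (x : nat -> E -> R) : Prop :=
  x 0%N = (fun _ => 0) /\ forall i : 'I_T, alg_step i (x i) (x i.+1).

End GNF.

(** Heights are dual variables.  Call [pi] a feasible potential of the residual
    graph if [pi tau = 0] and every residual edge [a] has nonnegative slack
    [cost a + gain a * pi (head a) - pi (tail a)]; pairing the conservation
    constraints of a fractional augmenting path from [u] with [pi] shows that
    it costs at least [pi u], with equality only if all its edges are tight.
    The heights themselves form a feasible potential: they are minima over the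
    finitely many candidates (a simple path to [tau], or a simple path ending
    in a cycle of gain < 1), and cutting a candidate where it revisits the tail
    of an edge yields the triangle inequality.  Augmenting along a cheapest path
    from [s_t] only creates reversals of tight edges, so the old heights stay
    feasible and bound every later augmenting path from below.  Finally, an
    augmenting path at time [t] from an older vertex never enters [s_t], which
    has no incoming edges, so it is already an augmenting path at time [t-1]. *)

From Pilot Require Import Defs.
From mathcomp Require Import all_boot all_order all_algebra.
From mathcomp Require Import ring lra.
Set Implicit Arguments. Unset Strict Implicit. Unset Printing Implicit Defensive.
Import Order.TTheory GRing.Theory Num.Theory.
Local Open Scope ring_scope.

Lemma sum_mul_indicator (R : pzSemiRingType) (T : finType) (P : pred T)
    (F : T -> R) a :
  \sum_(b | P b) F b * (b == a)%:R = (P a)%:R * F a.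
Proof.
rewrite (eq_bigr (fun b => if b == a then F b else 0)); last first.
  by move=> b _; case: eqP; rewrite ?mulr1 ?mulr0.
rewrite -big_mkcondr; case: (boolP (P a)) => Pa.
  by rewrite (big_pred1 a) ?mul1r // => b /=; case: eqP => [->|]; rewrite ?Pa ?andbF.
by rewrite big_pred0 ?mul0r // => b /=; case: eqP => [->|]; rewrite ?(negbTE Pa) ?andbF.
Qed.

Lemma sum_mul_partition (R : pzSemiRingType) (A V : finType)
    (g : V -> R) (F : A -> R) (p : A -> V) :
  \sum_w g w * \sum_(a | p a == w) F a = \sum_a g (p a) * F a.
Proof.
rewrite (partition_big p xpredT) //=; apply: eq_bigr => w _.
by rewrite mulr_sumr; apply: eq_bigr => a /eqP <-.
Qed.

Lemma uniq_size_le_card (T : finType) (s : seq T) :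
  uniq s -> (size s <= #|T|)%N.
Proof. by move/card_uniqP <-; exact: max_card. Qed.

Lemma notin_uniq_cat (T : eqType) (s1 s2 : seq T) z :
  uniq (s1 ++ s2) -> z \in s2 -> z \notin s1.
Proof. by rewrite cat_uniq => /and3P [_ /hasPn disjoint _] /disjoint. Qed.

Lemma subset_all (T : eqType) (p : pred T) (s1 s2 : seq T) :
  {subset s1 <= s2} -> all p s2 -> all p s1.
Proof. by move=> sub /allP p_s2; apply/allP => x /sub /p_s2. Qed.

(* If [S > K + G * S] then [G < 1], and the fixed point [K / (1 - G)] of
   [s |-> K + G * s] lies below [K + G * S]. *)
Lemma le_affine_fixpoint (R : realFieldType) (h S K G : R) :
  h <= S -> (G < 1 -> h <= K / (1 - G)) -> 0 <= K -> 0 < G -> 0 <= S ->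
  h <= K + G * S.
Proof.
move=> h_S h_fix K_ge0 G_gt0 S_ge0.
have [S_le|S_gt] := lerP S (K + G * S); first exact: le_trans h_S S_le.
have G_lt1 : G < 1 by rewrite ltNge; apply/negP => G_ge1; nra.
apply: le_trans (h_fix G_lt1) _.
by rewrite ler_pdivrMr ?subr_gt0 //; nra.
Qed.

Section ResidualFlows.
Variables (R : realFieldType) (I : gnf R).
Local Notation V := (V I).
Local Notation redge := (redge I).
Local Notation tau := (tau I).
Local Notation rh := (@rhead R I).

(** * Residual flows and weak duality *)

Lemma netoutD (f g : redge -> R) w :
  netout (fun a => f a + g a) w = netout f w + netout g w.
Proof.
rewrite /netout !big_split /=.
under [X in _ - X]eq_bigr do rewrite mulrDr.
by rewrite big_split opprD addrACA.
Qed.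

Lemma netoutZ (k : R) (f : redge -> R) w :
  netout (fun a => k * f a) w = k * netout f w.
Proof.
rewrite /netout mulrBr !mulr_sumr; congr (_ - _).
by apply: eq_bigr => a _; rewrite mulrCA.
Qed.

Lemma netout0 w : netout (fun _ : redge => 0) w = 0.
Proof. by rewrite /netout !big1 ?subr0 // => a _; rewrite mulr0. Qed.

Definition unit_flow (a : redge) : redge -> R := fun b => (b == a)%:R.

Lemma netout_unit_flow a w :
  netout (unit_flow a) w = (rtail a == w)%:R - rgain a * (rhead a == w)%:R.
Proof.
rewrite /netout /unit_flow sum_mul_indicator [_ * rgain a]mulrC.
rewrite (eq_bigr (fun b => 1 * (b == a)%:R)) => [|b _]; last by rewrite mul1r.
by rewrite sum_mul_indicator mulr1.
Qed.

Lemma aug_cost_combination (f g : redge -> R) k :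
  aug_cost (fun b => f b + k * g b) = aug_cost f + k * aug_cost g.
Proof.
rewrite /aug_cost mulr_sumr -big_split.
by apply: eq_bigr => b _; rewrite mulrDr mulrCA.
Qed.

Lemma aug_cost_unit_flow a : aug_cost (unit_flow a) = rcost a.
Proof. by rewrite /aug_cost /unit_flow sum_mul_indicator mul1r. Qed.

Definition walk_flow (q : seq redge) : redge -> R :=
  foldr (fun a f b => unit_flow a b + rgain a * f b) (fun _ => 0) q.
Definition walk_cost (q : seq redge) : R :=
  foldr (fun a c => rcost a + rgain a * c) 0 q.
Definition walk_gain (q : seq redge) : R := foldr (fun a g => rgain a * g) 1 q.

Lemma netout_walk_flow q u z w : walk u q z ->
  netout (walk_flow q) w = (u == w)%:R - walk_gain q * (z == w)%:R.
Proof.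
elim: q u => [|a q IHq] u /=; first by move/eqP->; rewrite netout0 mul1r subrr.
case/andP => /eqP <- /IHq walk_q.
by rewrite netoutD netoutZ netout_unit_flow walk_q; ring.
Qed.

Lemma aug_cost_walk_flow q : aug_cost (walk_flow q) = walk_cost q.
Proof.
elim: q => [|a q IHq] /=; first by rewrite /aug_cost big1 // => b _; rewrite mulr0.
by rewrite aug_cost_combination aug_cost_unit_flow IHq.
Qed.

Lemma walk_cost_cat p q :
  walk_cost (p ++ q) = walk_cost p + walk_gain p * walk_cost q.
Proof. by elim: p => [|a p IHp] /=; rewrite ?mul1r ?add0r // IHp; ring. Qed.

Lemma walk_gain_cat p q : walk_gain (p ++ q) = walk_gain p * walk_gain q.
Proof. by elim: p => [|a p IHp] /=; rewrite ?mul1r // IHp mulrA. Qed.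

Definition slack (pi : V -> R) (a : redge) : R :=
  rcost a + rgain a * pi (rhead a) - pi (rtail a).

Definition feasible_potential (y : E I -> R) t (pi : V -> R) : Prop :=
  pi tau = 0 /\ forall a, rexists y t a -> 0 <= slack pi a.

Lemma sum_flow_slack y t s f (pi : V -> R) : frac_aug y t s f -> pi tau = 0 ->
  \sum_a f a * slack pi a = aug_cost f - pi s.
Proof.
case=> _ _ _ conservation pi_tau.
have -> : pi s = \sum_w pi w * netout f w.
  rewrite -[pi s]mul1r -(sum_mul_indicator xpredT); apply: eq_bigr => w _.
  by case: (w =P tau) => [->|/eqP /conservation ->]; rewrite ?pi_tau ?mul0r.
have -> : \sum_w pi w * netout f w =
    \sum_a pi (rtail a) * f a - \sum_a pi (rhead a) * (rgain a * f a).
  rewrite -(sum_mul_partition _ _ (@rtail R I)) -(sum_mul_partition _ _ rh) -sumrB.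
  by apply: eq_bigr => w _; rewrite mulrBr.
by rewrite /aug_cost /slack -!sumrB; apply: eq_bigr => a _; ring.
Qed.

Lemma flow_slack_ge0 y t s f pi : feasible_potential y t pi -> frac_aug y t s f ->
  forall a, 0 <= f a * slack pi a.
Proof.
case=> _ slack_ge0 [_ f_ge0 f_res _] a.
have [->|/f_res /slack_ge0] := eqVneq (f a) 0; first by rewrite mul0r.
exact: mulr_ge0.
Qed.

Lemma potential_le_aug_cost y t s f pi :
  feasible_potential y t pi -> frac_aug y t s f -> pi s <= aug_cost f.
Proof.
move=> pi_feas f_aug; rewrite -subr_ge0 -(sum_flow_slack f_aug pi_feas.1).
by apply: sumr_ge0 => a _; exact: flow_slack_ge0 pi_feas f_aug a.
Qed.

Lemma slack_eq0_on_support y t s f pi :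
  feasible_potential y t pi -> frac_aug y t s f -> aug_cost f = pi s ->
  forall a, f a != 0 -> slack pi a = 0.
Proof.
move=> pi_feas f_aug f_cost a fa.
have sum0 : \sum_a f a * slack pi a = 0.
  by rewrite (sum_flow_slack f_aug pi_feas.1) f_cost subrr.
have /eqP := psumr_eq0P (fun b _ => flow_slack_ge0 pi_feas f_aug b) sum0 (i := a) isT.
by rewrite mulf_eq0 (negbTE fa) => /eqP.
Qed.

Hypothesis gain_gt0 : forall e : E I, 0 < gain e.
Hypothesis cost_gt0 : forall e : E I, 0 < cost e.

Lemma rgain_gt0 (a : redge) : 0 < rgain a.
Proof. by rewrite /rgain; case: a.2; rewrite ?invr_gt0. Qed.

Lemma rcost_ge0 (a : redge) : 0 <= rcost a.
Proof. by rewrite /rcost; case: a.2 => //; apply: ltW. Qed.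

Lemma walk_gain_gt0 q : 0 < walk_gain q.
Proof. by elim: q => [|a q IHq] //=; rewrite mulr_gt0 ?rgain_gt0. Qed.

Lemma walk_cost_ge0 q : 0 <= walk_cost q.
Proof.
by elim: q => [|a q IHq] //=; rewrite addr_ge0 ?rcost_ge0 // mulr_ge0 // ltW ?rgain_gt0.
Qed.

Lemma walk_flow_ge0 q b : 0 <= walk_flow q b.
Proof.
by elim: q => [|a q IHq] //=; rewrite addr_ge0 ?ler0n // mulr_ge0 // ltW ?rgain_gt0.
Qed.

Lemma walk_flow_eq0 q b : (walk_flow q b == 0) = (b \notin q).
Proof.
elim: q => [|a q IHq] //=; first by rewrite eqxx.
rewrite in_cons /unit_flow; have [->|_] /= := eqVneq b a.
  by rewrite paddr_eq0 ?oner_eq0 // mulr_ge0 ?walk_flow_ge0 // ltW ?rgain_gt0.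
by rewrite add0r mulf_eq0 gt_eqF ?rgain_gt0.
Qed.

Lemma slack_pair pi (e : E I) :
  slack pi (e, true) + gain e * slack pi (e, false) = cost e.
Proof.
rewrite /slack /rcost /rgain /rtail /rhead /=.
by field; rewrite gt_eqF.
Qed.

Lemma rexists_augment (y : E I -> R) t th (f : redge -> R) (a : redge) :
  0 < th -> (forall b, 0 <= f b) ->
  rexists (augment y th f) t a -> rexists y t a || (f (a.1, ~~ a.2) != 0).
Proof.
move=> th_gt0 f_ge0; case: a => e b /andP [present_e res].
rewrite /rexists present_e /=.
have [f_rev0|] := eqVneq (f (e, ~~ b)) 0; last by rewrite orbT.
rewrite orbF; move: res; rewrite /augment.
case: b {present_e} f_rev0 => /= f_rev0; rewrite f_rev0.
- case: (mu e) => // m; rewrite mulr0 mul0r subr0 => lt_m.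
  by apply: le_lt_trans _ lt_m; rewrite lerDl mulr_ge0 // ltW.
- rewrite mulr0 addr0 => gt_0; apply: lt_le_trans gt_0 _.
  by rewrite gerBl !mulr_ge0 ?invr_ge0 // ltW ?gain_gt0.
Qed.

(* Edges that become residual are reversals of support edges, which are tight. *)
Lemma feasible_potential_augment y t s f pi th :
  feasible_potential y t pi -> frac_aug y t s f -> aug_cost f = pi s -> 0 < th ->
  feasible_potential (augment y th f) t pi.
Proof.
move=> pi_feas f_aug f_cost th_gt0; split=> [|a]; first exact: pi_feas.1.
have [_ f_ge0 _ _] := f_aug; move/(rexists_augment th_gt0 f_ge0).
case/orP=> [/pi_feas.2 //|/(slack_eq0_on_support pi_feas f_aug f_cost)].
case: a => e [] /= tight; have := slack_pair pi e; rewrite tight.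
- by rewrite mulr0 addr0 => ->; apply: ltW.
- by rewrite add0r => cost_e; rewrite -(pmulr_rge0 _ (gain_gt0 e)) cost_e ltW.
Qed.

(** * Candidate augmenting paths *)

Definition junction (u : V) (P : seq redge) : V := last u (map rh P).

Lemma walk_cat u p q w :
  walk u (p ++ q) w = walk u p (junction u p) && walk (junction u p) q w.
Proof. by elim: p u => [|a p IHp] u /=; rewrite ?eqxx // IHp andbA. Qed.

Lemma walk_junction u p w : walk u p w -> junction u p = w.
Proof. by elim: p u => [|a p IHp] u /=; [move/eqP | case/andP=> _ /IHp]. Qed.

Lemma walk_split u P1 b P2 w : walk u (P1 ++ b :: P2) w ->
  walk u (rcons P1 b) (rh b) /\ walk (rh b) P2 w.
Proof.
rewrite walk_cat /= => /and3P [walk_P1 tail_b walk_P2]; split=> //.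
by rewrite -cats1 walk_cat walk_P1 /= tail_b eqxx.
Qed.

(* The shapes of augmenting paths of finite cost: a simple path [P] from [u] to
   [tau] (when [C = [::]]), or a simple path [P] from [u] followed by a lossy
   cycle [C] meeting it only at its end. *)
Definition candidate (y : E I -> R) t (u : V) (P C : seq redge) : bool :=
  all (rexists y t) (P ++ C) &&
  (if C is [::] then walk u P tau && uniq (u :: map rh P)
   else [&& walk u P (junction u P), walk (junction u P) C (junction u P),
          uniq (u :: map rh P), uniq (map rh C),
          tau \notin u :: map rh P, tau \notin map rh C,
          all (fun z => (z \in map rh C) ==> (z == junction u P)) (u :: map rh P) &
          walk_gain C < 1]).

(* The cycle carries the [k] units with [k = walk_gain P + k * walk_gain C]. *)
Definition candidate_flow (P C : seq redge) : redge -> R :=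
  if C is [::] then walk_flow P
  else fun b => walk_flow P b + walk_gain P / (1 - walk_gain C) * walk_flow C b.

Definition candidate_cost (P C : seq redge) : R :=
  if C is [::] then walk_cost P
  else walk_cost P + walk_gain P * walk_cost C / (1 - walk_gain C).

Lemma aug_cost_candidate_flow P C :
  aug_cost (candidate_flow P C) = candidate_cost P C.
Proof.
case: C => [|c C]; first exact: aug_cost_walk_flow.
by rewrite [LHS]aug_cost_combination !aug_cost_walk_flow mulrAC.
Qed.

Lemma path_candidate_aug_path y t u P :
  u != tau -> candidate y t u P [::] -> aug_path y t u (walk_flow P).
Proof.
move=> u_tau /andP [/allP res /andP [walk_P uniq_P]]; rewrite cats0 in res.
have supp : support_is (walk_flow P) P by move=> a; rewrite walk_flow_eq0 negbK.
split; last by apply: Or31; exists P.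
split=> // [|a|w w_tau]; first exact: walk_flow_ge0.
  by rewrite supp; apply: res.
by rewrite (netout_walk_flow _ walk_P) (eq_sym tau) (negbTE w_tau) mulr0 subr0 eq_sym.
Qed.

Lemma candidate_lassoE y t u P C : C != [::] ->
  candidate y t u P C =
  all (rexists y t) (P ++ C) &&
  [&& walk u P (junction u P), walk (junction u P) C (junction u P),
      uniq (u :: map rh P), uniq (map rh C),
      tau \notin u :: map rh P, tau \notin map rh C,
      all (fun z => (z \in map rh C) ==> (z == junction u P)) (u :: map rh P) &
      walk_gain C < 1].
Proof. by case: C. Qed.

Lemma candidate_flow_lassoE P C : C != [::] ->
  candidate_flow P C =
  (fun b => walk_flow P b + walk_gain P / (1 - walk_gain C) * walk_flow C b).
Proof. by case: C. Qed.

Lemma candidate_cost_lassoE P C : C != [::] ->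
  candidate_cost P C =
  walk_cost P + walk_gain P * walk_cost C / (1 - walk_gain C).
Proof. by case: C. Qed.

Lemma lasso_candidate_aug_path y t u P C : u != tau -> C != [::] ->
  candidate y t u P C -> aug_path y t u (candidate_flow P C).
Proof.
move=> u_tau C_nil; rewrite candidate_lassoE // (candidate_flow_lassoE _ C_nil).
case/andP=> /allP res /and5P [walk_P walk_C uniq_P uniq_C].
case/and4P=> tau_P tau_C meet gain_C.
have k_gt0 : 0 < walk_gain P / (1 - walk_gain C).
  by rewrite divr_gt0 ?walk_gain_gt0 // subr_gt0.
have k_ge0 := ltW k_gt0.
have supp : support_is
    (fun b => walk_flow P b + walk_gain P / (1 - walk_gain C) * walk_flow C b) (P ++ C).
  move=> a; rewrite mem_cat paddr_eq0 ?(mulr_ge0 k_ge0) ?walk_flow_ge0 //.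
  by rewrite mulf_eq0 (gt_eqF k_gt0) orFb !walk_flow_eq0 negb_and !negbK.
split.
  split=> // [a|a|w w_tau].
  - by rewrite addr_ge0 ?(mulr_ge0 k_ge0) ?walk_flow_ge0.
  - by rewrite supp; apply: res.
  rewrite netoutD netoutZ (netout_walk_flow _ walk_P) (netout_walk_flow _ walk_C).
  by rewrite eq_sym; field; rewrite subr_eq0 gt_eqF.
have [P0|P_nil] := eqVneq P [::].
  move: walk_C supp; rewrite P0 /junction /= => walk_C supp.
  by apply: Or32; exists C.
apply: Or33; exists P, C, (junction u P); split=> //; split=> //.
- apply: contraTN isT => u_C.
  have /eqP u_junction := implyP (allP meet u (mem_head _ _)) u_C.
  move: uniq_P; rewrite /= {1}u_junction /junction.
  by case: (P) P_nil => // p P' _ /=; rewrite mem_last.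
- by move=> z z_P z_C; apply/eqP; apply: (implyP (allP meet z z_P)).
Qed.

Lemma candidate_aug_path y t u P C : u != tau -> candidate y t u P C ->
  exists2 f, aug_path y t u f & aug_cost f = candidate_cost P C.
Proof.
move=> u_tau cand; exists (candidate_flow P C); last exact: aug_cost_candidate_flow.
have [C0|C_nil] := eqVneq C [::]; last exact: lasso_candidate_aug_path.
by move: cand; rewrite C0; apply: path_candidate_aug_path.
Qed.

Lemma candidate_size y t u P C : candidate y t u P C ->
  (size P <= #|V|)%N /\ (size C <= #|V|)%N.
Proof.
have path_size (w : V) (Q : seq redge) : uniq (w :: map rh Q) -> (size Q < #|V|)%N.
  by move/uniq_size_le_card; rewrite /= size_map.
case/andP=> _; case: C => [/andP [_ /path_size /ltnW] // | c C].
case/and5P=> _ _ /path_size /ltnW -> /uniq_size_le_card.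
by rewrite size_map.
Qed.

Lemma candidate_cost_ge0 y t u P C : candidate y t u P C -> 0 <= candidate_cost P C.
Proof.
have [->|C_nil] := eqVneq C [::]; first by move=> _; apply: walk_cost_ge0.
rewrite candidate_lassoE // candidate_cost_lassoE //.
case/andP=> _ /and5P [_ _ _ _ /and4P [_ _ _ gain_C]].
rewrite addr_ge0 ?walk_cost_ge0 // divr_ge0 ?subr_ge0 ?(ltW gain_C) //.
by rewrite mulr_ge0 ?walk_cost_ge0 ?(ltW (walk_gain_gt0 P)).
Qed.

Lemma candidate_tau y t : candidate y t tau [::] [::].
Proof. by rewrite /candidate /= eqxx. Qed.

(** * Heights *)

(* Both parts of a candidate visit at most [#|V|] vertices, so minimising over
   pairs of bounded sequences ranges over all candidates. *)
Definition height (y : E I -> R) t (u : V) : R :=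
  if [pick pc : #|V|.-bseq redge * #|V|.-bseq redge | candidate y t u pc.1 pc.2]
  is Some pc0 then
    let pc := [arg min_(pc < pc0 | candidate y t u pc.1 pc.2)
                 candidate_cost pc.1 pc.2]%O in
    candidate_cost pc.1 pc.2
  else 0.

Lemma height_le_candidate_cost y t u P C :
  candidate y t u P C -> height y t u <= candidate_cost P C.
Proof.
move=> cand; have [size_P size_C] := candidate_size cand.
rewrite /height; case: pickP => [pc0 cand0 | no_cand] /=; last first.
  by have := no_cand (Bseq size_P, Bseq size_C); rewrite /= cand.
by case: arg_minP => // pc _ /(_ (Bseq size_P, Bseq size_C)); apply.
Qed.

Lemma height_attained y t u P C : candidate y t u P C ->
  exists P' C', candidate y t u P' C' /\ height y t u = candidate_cost P' C'.
Proof.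
move=> cand; have [size_P size_C] := candidate_size cand.
rewrite /height; case: pickP => [pc0 cand0 | no_cand] /=; last first.
  by have := no_cand (Bseq size_P, Bseq size_C); rewrite /= cand.
by case: arg_minP => // pc cand_pc _; exists pc.1, pc.2.
Qed.

Lemma height_ge0 y t u : 0 <= height y t u.
Proof.
rewrite /height; case: pickP => [pc0 cand0 | _] //=.
by case: arg_minP => // pc cand_pc _; apply: candidate_cost_ge0 cand_pc.
Qed.

Lemma height_tau y t : height y t tau = 0.
Proof.
apply/le_anti; rewrite height_ge0 andbT.
exact: height_le_candidate_cost (candidate_tau y t).
Qed.

Lemma walk_gain_rot C1 b C2 :
  walk_gain (C2 ++ rcons C1 b) = walk_gain (C1 ++ b :: C2).
Proof. by rewrite -cat_rcons !walk_gain_cat mulrC. Qed.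

Lemma candidate_cost_cons (a : redge) P C :
  candidate_cost (a :: P) C = rcost a + rgain a * candidate_cost P C.
Proof. by case: C => [|c C] //=; ring. Qed.

Lemma candidate_cost_cat Q P C :
  candidate_cost (Q ++ P) C = walk_cost Q + walk_gain Q * candidate_cost P C.
Proof.
by case: C => [|c C]; rewrite /candidate_cost walk_cost_cat ?walk_gain_cat //; ring.
Qed.

Lemma candidate_cost_rot P C1 b C2 : walk_gain (C1 ++ b :: C2) != 1 ->
  candidate_cost P (C1 ++ b :: C2) =
  walk_cost (P ++ rcons C1 b) +
  walk_gain (P ++ rcons C1 b) * candidate_cost [::] (C2 ++ rcons C1 b).
Proof.
have C_nil : C1 ++ b :: C2 != [::] by case: C1.
have rot_nil : C2 ++ rcons C1 b != [::] by rewrite -size_eq0 size_cat size_rcons addnS.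
rewrite eq_sym -subr_eq0 => gain_C.
rewrite !candidate_cost_lassoE // (walk_gain_rot C1 b C2).
move: gain_C; rewrite -cat_rcons !walk_cost_cat !walk_gain_cat /= => gain_C.
by field.
Qed.

Lemma candidate_cons y t (a : redge) P C :
  rexists y t a -> rtail a != tau -> rtail a \notin rhead a :: map rh (P ++ C) ->
  candidate y t (rhead a) P C -> candidate y t (rtail a) (a :: P) C.
Proof.
move=> res_a tail_tau; rewrite map_cat in_cons mem_cat !negb_or.
case/and3P=> tail_head tail_P tail_C /andP [res shape].
apply/andP; split; first by rewrite /= res_a.
case: C res shape tail_C => [|c C] res shape tail_C.
  case/andP: shape => walk_P uniq_P; rewrite /= eqxx walk_P /=.
  by move: uniq_P => /= ->; rewrite andbT in_cons negb_or tail_head.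
case/and5P: shape => walk_P walk_C uniq_P uniq_C /and4P [tau_P tau_C meet gain_C].
rewrite /junction /= in walk_P walk_C meet *.
apply/and5P; split=> //=; first by rewrite eqxx.
  by move: uniq_P => /= /andP [-> ->]; rewrite !andbT in_cons negb_or tail_head.
apply/and4P; split=> //; first by rewrite in_cons negb_or eq_sym tail_tau.
by rewrite /= (negbTE tail_C).
Qed.

Lemma candidate_suffix y t u P1 b P2 C :
  candidate y t u (P1 ++ b :: P2) C -> candidate y t (rh b) P2 C.
Proof.
have sub : subseq (rh b :: map rh P2) (u :: map rh (P1 ++ b :: P2)).
  by rewrite map_cat -cat_cons suffix_subseq.
have junction_P : junction u (P1 ++ b :: P2) = junction (rh b) P2.
  by rewrite /junction map_cat last_cat.
have res_suffix D : {subset P2 ++ D <= (P1 ++ b :: P2) ++ D}.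
  by move=> a; rewrite !mem_cat in_cons => /orP [] ->; rewrite !orbT.
have [->|C_nil] := eqVneq C [::].
  rewrite /candidate => /andP [/(subset_all (res_suffix _)) -> /andP [walk_P uniq_P]].
  by rewrite (walk_split walk_P).2 (subseq_uniq sub uniq_P).
rewrite !candidate_lassoE // junction_P.
case/andP=> /(subset_all (res_suffix _)) -> /and5P [/walk_split [_ ->] -> + -> +].
move=> /(subseq_uniq sub) -> /and4P [tau_P -> meet ->]; rewrite !andTb andbT.
apply/andP; split; first by apply: contra tau_P; apply: mem_subseq.
by apply: subset_all meet; apply: mem_subseq.
Qed.

Lemma candidate_path y t u P C :
  candidate y t u P C -> walk u P (junction u P) && uniq (u :: map rh P).
Proof.
have [->|C_nil] := eqVneq C [::].
  by case/andP=> _ /andP [walk_P ->]; rewrite (walk_junction walk_P) walk_P.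
by rewrite candidate_lassoE // => /andP [_ /and5P [-> _ -> _ _]].
Qed.

Lemma tau_notin_prefix y t u P1 b P2 C : rh b != tau ->
  candidate y t u (P1 ++ b :: P2) C -> tau \notin u :: map rh (rcons P1 b).
Proof.
move=> b_tau; have verts : u :: map rh (P1 ++ b :: P2) =
    (u :: map rh (rcons P1 b)) ++ map rh P2 by rewrite -cat_rcons map_cat.
have [C0|C_nil] := eqVneq C [::].
  rewrite C0 /candidate verts => /andP [_ /andP [/walk_split [_ walk_P2] uniq_P]].
  apply: notin_uniq_cat uniq_P _.
  have := mem_last (rh b) (map rh P2); rewrite -/(junction _ _) (walk_junction walk_P2).
  by rewrite in_cons eq_sym (negbTE b_tau).
rewrite candidate_lassoE // verts mem_cat negb_or.
by case/andP=> _ /and5P [_ _ _ _ /and3P [/andP [-> _] _ _]].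
Qed.

Lemma candidate_path_cycle y t (a : redge) P1 b P2 C :
  rexists y t a -> rtail a = rh b -> rh b != tau ->
  candidate y t (rhead a) (P1 ++ b :: P2) C ->
  walk_gain (a :: rcons P1 b) < 1 -> candidate y t (rh b) [::] (a :: rcons P1 b).
Proof.
move=> res_a tail_b b_tau cand gain_cycle.
have tau_cycle := tau_notin_prefix b_tau cand.
have sub : subseq (rhead a :: map rh (rcons P1 b)) (rhead a :: map rh (P1 ++ b :: P2)).
  by rewrite -cat_rcons map_cat -cat_cons prefix_subseq.
have /andP [/walk_split [walk_cycle _] uniq_P] := candidate_path cand.
have uniq_cycle := subseq_uniq sub uniq_P.
rewrite candidate_lassoE //; apply/andP; split.
  rewrite /= res_a; apply: subset_all (andP cand).1 => c.
  by rewrite mem_rcons !mem_cat !in_cons => /orP [] ->; rewrite ?orbT.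
rewrite /junction /=; move: uniq_cycle gain_cycle => /= -> ->.
by rewrite tail_b !eqxx walk_cycle tau_cycle implybT in_cons in_nil orbF eq_sym b_tau.
Qed.

Lemma candidate_rotate y t u P C1 b C2 :
  candidate y t u P (C1 ++ b :: C2) -> candidate y t (rh b) [::] (C2 ++ rcons C1 b).
Proof.
have C_nil : C1 ++ b :: C2 != [::] by case: C1.
have rot_nil : C2 ++ rcons C1 b != [::].
  by rewrite -size_eq0 size_cat size_rcons addnS.
have verts : map rh (C2 ++ rcons C1 b) = rot (size C1).+1 (map rh (C1 ++ b :: C2)).
  by rewrite -map_rot -cat_rcons -(size_rcons C1 b) rot_size_cat.
rewrite !candidate_lassoE //.
case/andP=> res /and5P [_ walk_C _ uniq_C /and4P [_ tau_C _ gain_C]].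
have b_tau : rh b != tau.
  by apply: contraNneq tau_C => <-; rewrite map_f // mem_cat mem_head orbT.
have [walk_C1 walk_C2] := walk_split walk_C.
apply/andP; split.
  apply: subset_all res => c; rewrite cat0s !mem_cat mem_rcons !in_cons.
  by case/or3P=> ->; rewrite ?orbT.
rewrite /junction /= eqxx implybT walk_cat -/(junction _ _) (walk_junction walk_C2).
rewrite walk_C2 walk_C1 verts rot_uniq uniq_C mem_rot tau_C (walk_gain_rot C1 b C2).
by rewrite gain_C in_cons in_nil orbF eq_sym b_tau.
Qed.

Lemma uniq_lasso_cycle y t u P C1 b C2 : rh b \notin u :: map rh P ->
  candidate y t u P (C1 ++ b :: C2) ->
  uniq ((u :: map rh P) ++ map rh (rcons C1 b)).
Proof.
move=> b_P; have C_nil : C1 ++ b :: C2 != [::] by case: C1.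
rewrite candidate_lassoE // => /andP [_ /and5P [_ walk_C uniq_P + /and4P [_ _ meet _]]].
rewrite -cat_rcons map_cat => uniq_C.
rewrite cat_uniq uniq_P (subseq_uniq (prefix_subseq _ _) uniq_C) andbT /=.
apply/hasPn => z z_cycle; apply/negP => z_P.
have /eqP z_junction : z == junction u P.
  by apply: (implyP (allP meet z z_P)); rewrite -cat_rcons map_cat mem_cat z_cycle.
have z_b : z != rh b by apply: contraNneq b_P => <-.
have last_C2 : last (rh b) (map rh C2) = z.
  rewrite z_junction -[in RHS](walk_junction walk_C) /junction.
  by rewrite -cat_rcons map_cat last_cat map_rcons last_rcons.
have := mem_last (rh b) (map rh C2); rewrite last_C2 in_cons (negbTE z_b) /=.
by move/(notin_uniq_cat uniq_C); rewrite z_cycle.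
Qed.

Lemma candidate_lasso_cycle y t (a : redge) P C1 b C2 :
  rexists y t a -> rtail a = rh b -> rh b \notin rhead a :: map rh P ->
  candidate y t (rhead a) P (C1 ++ b :: C2) ->
  walk_gain (a :: P ++ rcons C1 b) < 1 ->
  candidate y t (rh b) [::] (a :: P ++ rcons C1 b).
Proof.
move=> res_a tail_b b_P cand gain_cycle.
have uniq_cycle := uniq_lasso_cycle b_P cand.
have C_nil : C1 ++ b :: C2 != [::] by rewrite -size_eq0 size_cat addnS.
move: cand; rewrite candidate_lassoE //.
case/andP=> res /and5P [walk_P walk_C _ _ /and4P [tau_P tau_C _ _]].
have [walk_C1 _] := walk_split walk_C.
have b_tau : rh b != tau.
  by apply: contraNneq tau_C => <-; rewrite map_f // mem_cat mem_head orbT.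
have tau_cycle : tau \notin (rhead a :: map rh P) ++ map rh (rcons C1 b).
  rewrite mem_cat negb_or tau_P; apply: contra tau_C.
  by rewrite -cat_rcons map_cat mem_cat => ->.
rewrite candidate_lassoE //; apply/andP; split.
  rewrite /= res_a; apply: subset_all res => c; rewrite !mem_cat mem_rcons !in_cons.
  by case/or3P=> ->; rewrite ?orbT.
rewrite /junction /= tail_b eqxx implybT walk_cat walk_P walk_C1 !map_cat.
move: uniq_cycle tau_cycle gain_cycle => /= -> -> ->.
by rewrite in_cons in_nil orbF eq_sym b_tau.
Qed.

Lemma height_le_through_cycle y t u (a : redge) Q P C :
  candidate y t u P C -> (walk_gain (a :: Q) < 1 -> candidate y t u [::] (a :: Q)) ->
  height y t u <= rcost a + rgain a * (walk_cost Q + walk_gain Q * candidate_cost P C).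
Proof.
move=> cand cycle; rewrite mulrDr addrA mulrA.
rewrite -[rcost a + _]/(walk_cost (a :: Q)) -[_ * walk_gain Q]/(walk_gain (a :: Q)).
apply: le_affine_fixpoint; first exact: height_le_candidate_cost cand.
- move=> gain_lt1; have := height_le_candidate_cost (cycle gain_lt1).
  by rewrite candidate_cost_lassoE //= add0r mul1r.
- exact: walk_cost_ge0.
- exact: walk_gain_gt0.
- exact: candidate_cost_ge0 cand.
Qed.

(* A candidate from [rhead a] that already visits [rtail a] is cut there into a
   shorter candidate and a cycle through [a]; [le_affine_fixpoint] compares
   both with the original. *)
Lemma height_shortcut y t (a : redge) P C :
  rexists y t a -> rtail a != tau -> rtail a != rhead a ->
  candidate y t (rhead a) P C ->
  height y t (rtail a) <= rcost a + rgain a * candidate_cost P C.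
Proof.
move=> res_a tail_tau tail_head cand.
have [fresh|] := boolP (rtail a \notin rhead a :: map rh (P ++ C)).
  by rewrite -candidate_cost_cons; apply/height_le_candidate_cost/candidate_cons.
rewrite negbK in_cons (negbTE tail_head) map_cat mem_cat /=.
have [tail_P _|tail_P /= /mapP [b b_C tail_b]] := boolP (rtail a \in map rh P).
  case/mapP: tail_P cand => b /splitPr [P1 P2] tail_b cand.
  rewrite tail_b -cat_rcons candidate_cost_cat.
  apply: height_le_through_cycle; first exact: (candidate_suffix cand).
  by apply: candidate_path_cycle cand; rewrite -?tail_b.
case/splitPr: b_C cand => C1 C2 cand.
rewrite tail_b candidate_cost_rot; last first.
  rewrite lt_eqF //; move: cand; rewrite candidate_lassoE; last by case: C1.
  by case/andP=> _ /and5P [_ _ _ _ /and4P [_ _ _ ->]].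
apply: height_le_through_cycle; first exact: candidate_rotate cand.
apply: candidate_lasso_cycle cand => //.
by rewrite -tail_b in_cons negb_or tail_head.
Qed.

Hypothesis src_neq_tau : forall i, @src R I i != tau.
Hypothesis tail_neq_head : forall e : E I, Defs.tail e != Defs.head e.
Hypothesis dummy_edge : forall v : V, v != tau ->
  exists e : E I, [/\ Defs.tail e = v, Defs.head e = tau & mu e = None].

Lemma present_tau t : present t tau.
Proof. by apply/forallP => i; rewrite (negbTE (src_neq_tau i)). Qed.

Lemma rtail_neq_rhead (a : redge) : rtail a != rhead a.
Proof.
rewrite /rtail /rhead; case: a.2; first exact: tail_neq_head.
by rewrite eq_sym tail_neq_head.
Qed.

Lemma rexists_present y t (a : redge) :
  rexists y t a -> present t (rtail a) && present t (rhead a).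
Proof.
by case/andP=> /andP [tail_e head_e] _; rewrite /rtail /rhead; case: a.2; apply/andP.
Qed.

Lemma candidate_exists y t w : present t w -> exists P C, candidate y t w P C.
Proof.
move=> present_w; have [->|w_tau] := eqVneq w tau.
  by exists [::], [::]; apply: candidate_tau.
have [e [tail_e head_e mu_e]] := dummy_edge w_tau.
exists [:: (e, true)], [::].
rewrite /candidate /rexists /epresent /= /rtail /rhead /= tail_e head_e mu_e.
by rewrite present_w present_tau !eqxx in_cons in_nil orbF w_tau.
Qed.

Lemma height_feasible y t : feasible_potential y t (height y t).
Proof.
split=> [|a res_a]; first exact: height_tau.
rewrite /slack; have [->|tail_tau] := eqVneq (rtail a) tau.
  by rewrite height_tau subr0 addr_ge0 ?rcost_ge0 ?mulr_ge0 ?height_ge0 ?ltW ?rgain_gt0.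
have /andP [_ present_head] := rexists_present res_a.
have [P [C cand]] := candidate_exists y present_head.
have [P' [C' [cand' ->]]] := height_attained cand.
by rewrite subr_ge0 height_shortcut ?rtail_neq_rhead.
Qed.

Lemma height_le_aug_cost y t v f : aug_path y t v f -> height y t v <= aug_cost f.
Proof. by case=> f_aug _; apply: potential_le_aug_cost (height_feasible y t) f_aug. Qed.

Lemma height_aug_path y t u : u != tau -> present t u ->
  exists2 f, aug_path y t u f & aug_cost f = height y t u.
Proof.
move=> u_tau present_u; have [P [C cand]] := candidate_exists y present_u.
have [P' [C' [cand' ->]]] := height_attained cand.
exact: candidate_aug_path cand'.
Qed.

Lemma cheapest_aug_cost y t s f : s != tau -> present t s ->
  cheapest_aug y t s f -> aug_cost f = height y t s.
Proof.
move=> s_tau present_s [f_aug f_min]; apply/le_anti.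
rewrite height_le_aug_cost // andbT.
have [g g_aug <-] := height_aug_path y s_tau present_s.
exact: f_min.
Qed.

(* Augmenting along a cheapest path keeps [height y t] a feasible potential,
   which bounds every augmenting path of the new flow from below. *)
Lemma height_augment y t s f th v : s != tau -> present t s -> v != tau ->
  present t v -> cheapest_aug y t s f -> 0 < th ->
  height y t v <= height (augment y th f) t v.
Proof.
move=> s_tau present_s v_tau present_v f_cheapest th_gt0.
have f_cost := cheapest_aug_cost s_tau present_s f_cheapest.
have feasible :=
  feasible_potential_augment (height_feasible y t) f_cheapest.1.1 f_cost th_gt0.
have [g [g_aug _] <-] := height_aug_path (augment y th f) v_tau present_v.
exact: potential_le_aug_cost feasible g_aug.
Qed.

(** * Runs of the algorithm *)

Hypothesis src_inj : injective (@src R I).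
Hypothesis head_neq_src : forall (e : E I) j, Defs.head e != src j.

Lemma presentS t (u : V) : present t u -> present t.+1 u.
Proof.
by move/forallP=> early; apply/forallP => j; apply/implyP => /(implyP (early j))/leqW.
Qed.

Lemma epresentS t (e : E I) : epresent t e -> epresent t.+1 e.
Proof. by case/andP=> /presentS tail_e /presentS head_e; apply/andP. Qed.

Lemma present_src (i : 'I_(T I)) : present i.+1 (src i).
Proof. by apply/forallP => j; apply/implyP => /eqP /src_inj ->. Qed.

Lemma src_not_present (i : 'I_(T I)) : ~~ present i (src i).
Proof. by apply/negP => /forallP /(_ i); rewrite eqxx ltnn. Qed.

Lemma present_pred (i : 'I_(T I)) (u : V) :
  present i.+1 u -> u != src i -> present i u.
Proof.
move/forallP=> present_u u_src; apply/forallP => j; apply/implyP => /eqP j_u.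
have := implyP (present_u j) (introT eqP j_u); rewrite ltnS leq_eqVlt.
case/orP=> [/eqP/val_inj j_i|//]; by move: u_src; rewrite -j_u j_i eqxx.
Qed.

Lemma frac_aug_outside y t s f (e : E I) b :
  frac_aug y t s f -> ~~ epresent t e -> f (e, b) = 0.
Proof.
by case=> _ _ f_res _ e_absent; apply/eqP; apply: contraNT e_absent => /f_res /andP [].
Qed.

Lemma alg_step_outside (i : 'I_(T I)) y y' (e : E I) :
  alg_step i y y' -> ~~ epresent i.+1 e -> y' e = y e.
Proof.
case=> n [ys [fs [ths [<- <- _ steps]]]] e_absent.
suff : forall k, (k <= n)%N -> ys k e = ys 0%N e by apply.
elim=> [//|k IHk] lt_kn; have [[_ [[f_aug _] _] _ _ _] ->] := steps k lt_kn.
rewrite /augment !(frac_aug_outside _ f_aug e_absent) mulr0 mul0r addr0 subr0.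
exact: IHk (ltnW lt_kn).
Qed.

Lemma alg_run_outside (x : nat -> E I -> R) : alg_run x ->
  forall j, (j <= T I)%N -> forall e, ~~ epresent j e -> x j e = 0.
Proof.
case=> x0 steps; elim=> [|j IHj] j_le e e_absent; first by rewrite x0.
rewrite (alg_step_outside (steps (Ordinal j_le)) e_absent) IHj //; first exact: ltnW.
by apply: contra e_absent; apply: epresentS.
Qed.

(* The new source [src i] has no incoming residual edges, so by conservation
   an augmenting path from an older vertex cannot use it. *)
Lemma aug_path_pred (i : 'I_(T I)) (y : E I -> R) (v : V) (g : redge -> R) :
  (forall e, ~~ epresent i e -> y e = 0) -> present i v ->
  aug_path y i.+1 v g -> aug_path y i v g.
Proof.
move=> y_outside present_v [[v_tau g_ge0 g_res conservation] shape].
split=> //; split=> // a g_a.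
have v_src : v != src i by apply: contraNneq (src_not_present i) => <-.
have head_src b : g b != 0 -> rhead b != src i.
  case: b => e [] g_b; rewrite /rhead /=; first exact: head_neq_src.
  have /andP [_] := g_res _ g_b; apply: contraTneq => tail_src.
  rewrite y_outside ?ltxx //.
  by rewrite /epresent tail_src (negbTE (src_not_present i)).
have no_inflow : \sum_(b | rhead b == src i) rgain b * g b = 0.
  apply: big1 => b /eqP head_b; have [->|/head_src] := eqVneq (g b) 0.
    by rewrite mulr0.
  by rewrite head_b eqxx.
have tail_src : rtail a != src i.
  apply/eqP => tail_a; move: (conservation _ (src_neq_tau i)).
  rewrite eq_sym (negbTE v_src) /netout no_inflow subr0 => /eqP.
  rewrite gt_eqF // (bigD1 a) ?tail_a //= ltr_pwDl ?sumr_ge0 //.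
  by rewrite lt_def g_a g_ge0.
case/andP: (g_res a g_a) => /andP [tail_present head_present] res_a.
rewrite /rexists res_a andbT /epresent.
move: tail_src (head_src a g_a) tail_present head_present; rewrite /rtail /rhead.
by case: a.2 => /= *; rewrite !present_pred.
Qed.

Lemma height_alg_step (i : 'I_(T I)) y y' (v : V) : v != tau -> present i.+1 v ->
  alg_step i y y' -> height y i.+1 v <= height y' i.+1 v.
Proof.
move=> v_tau present_v [n [ys [fs [ths [<- <- _ steps]]]]].
suff : forall k, (k <= n)%N -> height (ys 0%N) i.+1 v <= height (ys k) i.+1 v.
  by apply.
elim=> [//|k IHk] lt_kn; have [[_ f_cheapest th_gt0 _ _] ->] := steps k lt_kn.
apply: le_trans (IHk (ltnW lt_kn)) _.
exact: height_augment (src_neq_tau i) (present_src i) v_tau present_v f_cheapest th_gt0.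
Qed.

Lemma is_height_mono (x : nat -> E I -> R) (i : 'I_(T I)) (v : V) h_prev h_cur :
  alg_run x -> present i v -> is_height (x i) i v h_prev ->
  is_height (x i.+1) i.+1 v h_cur -> h_prev <= h_cur.
Proof.
move=> run present_v; rewrite /is_height; case: eqP => [_ -> -> // | /eqP v_tau].
move=> [_ prev_min] [[f [f_aug <-]] _].
have present_v' := presentS present_v.
have x_outside := alg_run_outside run (ltnW (ltn_ord i)).
have [g g_aug g_cost] := height_aug_path (x i) v_tau present_v'.
apply: le_trans (prev_min g (aug_path_pred x_outside present_v g_aug)) _.
rewrite g_cost; apply: le_trans (height_le_aug_cost f_aug).
exact: height_alg_step v_tau present_v' (run.2 i).
Qed.

End ResidualFlows.

Theorem lemma2 (R : realFieldType) (I : gnf R) (x : nat -> E I -> R)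
  (i : 'I_(T I)) (v : V I) (h_prev h_cur : R) :
  @wf_instance R I ->
  alg_run x ->
  present i v ->
  is_height (x i) i v h_prev ->
  is_height (x i.+1) i.+1 v h_cur ->
  h_prev <= h_cur.
Proof.
case=> src_inj [src_tau [head_src [_ [tail_head [_ [pos [_ [_ [dummy _]]]]]]]]].
apply: is_height_mono => // [e | e | w /dummy [e [tail_e head_e mu_e _ _]]].
- by case: (pos e).
- by case: (pos e).
- by exists e.
Qed.
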